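(* Let $h:\mathcal{S}^{2}\to\mathbb{R}$ be a function and consider the optimization problem \[ \inf_{\nu\in\mathcal{P}(\mathcal{S}^{2})}\left\{ J(\nu)+\sum_{\mathbf{x}\in\mathcal{S}^{2}}h(\mathbf{x})\nu(\mathbf{x})\right\}, \] together with the static (ergodic) Bellman equation, for all $\mathbf{x}\in\mathcal{S}^{2}$, \[ 0=\inf_{u\in U}\left\{ \sum_{\mathbf{y}\in\mathcal{S}^{2}}\left( u(\mathbf{y})\left[ W(\mathbf{y})-W(\mathbf{x})\right] +r(\mathbf{x},\mathbf{y})\ell\left( \frac{u(\mathbf{y})}{r(\mathbf{x},\mathbf{y})}\right) \right) -\gamma+h(\mathbf{x})\right\}, \] in the unknowns $\gamma\in\mathbb{R}$ and $W:\mathcal{S}^{2}\to\mathbb{R}$. Consider any solution $(\gamma,W)$ of the Bellman equation, with $W$ normalized so that $\bar{\nu}(\mathbf{x})=\bar{\mu}(\mathbf{x})e^{-2W(\mathbf{x})}$ is a probability measure on $\mathcal{S}^{2}$. Then $\bar{\nu}$ is a minimizer of the optimization problem. Conversely, if $\nu^{\ast}$ is a minimizing measure of the optimization problem, then a solution $(\gamma^{\ast},W^{\ast})$ of the Bellman equation is given by \[ W^{\ast}(\mathbf{x})=-\log\left[ \frac{d\nu^{\ast}}{d\bar{\mu}}\right]^{1/2}(\mathbf{x}),\qquad \gamma^{\ast}=J(\nu^{\ast})+\sum_{\mathbf{x}\in\mathcal{S}^{2}}h(\mathbf{x})\nu^{\ast}(\mathbf{x}), \] and by uniqueness $(\ga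mma^{\ast},W^{\ast})=(\gamma,W)$.
   Context: Setting: $\mathcal{S}$ is a finite state space; two temperatures with ergodic rate matrices $\Gamma^{1},\Gamma^{2}$ on $\mathcal{S}$, reversible with respect to their unique invariant measures $\mu_{1},\mu_{2}$ (all states communicate), $\mu=\mu_{1}\times\mu_{2}$. With $\rho(x_{1},x_{2})=\mu(x_{1},x_{2})/[\mu(x_{1},x_{2})+\mu(x_{2},x_{1})]$, the infinite swapping process on $\mathcal{S}^{2}$ has rates $r(\mathbf{x},\mathbf{y})=\Gamma^{\infty}_{\mathbf{x},\mathbf{y}}$, where $\Gamma^{\infty}_{(x_{1},x_{2}),(y_{1},x_{2})}=\rho(x_{1},x_{2})\Gamma^{1}_{x_{1},y_{1}}+\rho(x_{2},x_{1})\Gamma^{2}_{x_{1},y_{1}}$ for $y_{1}\neq x_{1}$, $\Gamma^{\infty}_{(x_{1},x_{2}),(x_{1},y_{2})}=\rho(x_{1},x_{2})\Gamma^{2}_{x_{2},y_{2}}+\rho(x_{2},x_{1})\Gamma^{1}_{x_{2},y_{2}}$ for $y_{2}\neq x_{2}$, and $0$ for other off-diagonal pairs; $q^{\infty}(\mathbf{x})=\sum_{\mathbf{y}\neq\mathbf{x}}\Gamma^{\infty}_{\mathbf{x},\mathbf{y}}$. Its invariant measure is the symmetrized $\bar{\mu}(y_{1},y_{2})=\frac12[\mu(y_{1},y_{2})+\mu(y_{2},y_{1})]$. $J$ is the (strictly convex) large deviation rate function of the empirical measure of the infinite swapping process: $J(\nu)=\sum_{\mathbf{x}}q^{\infty}(\mathbf{x})\theta(\mathbf{x})\bar{\mu}(\mathbf{x})-\sum_{\mathbf{x},\mathbf{y}}\theta^{1/2}(\mathbf{x})\theta^{1/2}(\mathbf{y})\Gamma^{\infty}_{\mathbf{x},\mathbf{y}}\bar{\mu}(\mathbf{x})$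 with $\theta=\nu/\bar{\mu}$. The control space is $U=[0,\infty)^{|\mathcal{S}|^{2}}$ (vectors of jump rates $u(\mathbf{y})$), and $\ell(x)=x\log x-x+1$ for $x\geq0$, $\ell(x)=\infty$ otherwise. Solutions $(\gamma,W)$ of the Bellman equation have $\gamma$ unique and $W$ unique up to an additive constant. *)

From HB Require Import structures.
From mathcomp Require Import all_boot all_order all_algebra.
From mathcomp Require Import all_classical all_reals all_analysis.
Set Implicit Arguments. Unset Strict Implicit. Unset Printing Implicit Defensive.
Import Order.TTheory GRing.Theory Num.Theory.
Local Open Scope ring_scope.
Local Open Scope classical_set_scope.

Section Defs.
Variables (R : realType) (S : finType).

Definition rate_matrix (G : S -> S -> R) : Prop :=
  (forall x y, x != y -> 0 <= G x y) /\
  (forall x, G x x = - \sum_(y | y != x) G x y).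

Definition irreducible (G : S -> S -> R) : Prop :=
  forall x y, connect [rel a b | (a != b) && (0 < G a b)] x y.

Definition prob_vec (T : finType) (m : T -> R) : Prop :=
  (forall x, 0 <= m x) /\ \sum_x m x = 1.

Definition reversible (G : S -> S -> R) (m : S -> R) : Prop :=
  forall x y, m x * G x y = m y * G y x.

Variables (G1 G2 : S -> S -> R) (mu1 mu2 : S -> R).

Definition mu (a b : S) : R := mu1 a * mu2 b.

Definition rho (a b : S) : R := mu a b / (mu a b + mu b a).

(** symmetrized invariant measure of the infinite swapping process *)
Definition mubar (y : S * S) : R := (mu y.1 y.2 + mu y.2 y.1) / 2.

(** off-diagonal rates r(x,y) = Gamma^infty_{x,y}; r(x,x) := 0 *)
Definition rinf (x y : S * S) : R :=
  if (x.2 == y.2) && (x.1 != y.1) then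
    rho x.1 x.2 * G1 x.1 y.1 + rho x.2 x.1 * G2 x.1 y.1
  else if (x.1 == y.1) && (x.2 != y.2) then
    rho x.1 x.2 * G2 x.2 y.2 + rho x.2 x.1 * G1 x.2 y.2
  else 0.

Definition qinf (x : S * S) : R := \sum_(y | y != x) rinf x y.

(** Large deviation rate function of the empirical measure *)
Definition Jrate (nu : S * S -> R) : R :=
  let theta := fun x => nu x / mubar x in
  \sum_x qinf x * theta x * mubar x
  - \sum_x \sum_(y | y != x) Num.sqrt (theta x) * Num.sqrt (theta y) * rinf x y * mubar x.

Definition objective (h : S * S -> R) (nu : S * S -> R) : R :=
  Jrate nu + \sum_x h x * nu x.

Definition minimizer (h : S * S -> R) (nu : S * S -> R) : Prop :=
  prob_vec nu /\ forall nu', prob_vec nu' -> objective h nu <= objective h nu'.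

End Defs.

(** ell(x) = x log x - x + 1 for x >= 0 (0 log 0 = 0); only used at x >= 0. *)
Definition ell {R : realType} (x : R) : R :=
  if x == 0 then 1 else x * ln x - x + 1.

(** the term r * ell(u / r), with the usual conventions when r = 0:
    0 * ell(0/0) = 0 and 0 * ell(u/0) = +oo for u > 0. *)
Definition rell {R : realType} (r u : R) : \bar R :=
  if 0 < r then (r * ell (u / r))%:E
  else if u == 0 then 0%E else +oo%E.

Section Bellman.
Variables (R : realType) (S : finType).
Variables (G1 G2 : S -> S -> R) (mu1 mu2 : S -> R).

Definition Uctrl : set (S * S -> R) := [set u | forall y, 0 <= u y].

Definition bellman (h : S * S -> R) (gamma : R) (W : S * S -> R) : Prop :=
  forall x : S * S,
    0%E = ereal_inf [set ((\sum_(y : S * S)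
              ((u y * (W y - W x))%:E + rell (rinf G1 G2 mu1 mu2 x y) (u y)))
              + (h x - gamma)%:E)%E | u in Uctrl].

End Bellman.

From HB Require Import structures.
From mathcomp Require Import all_boot all_order all_algebra.
From mathcomp Require Import all_classical all_reals all_analysis.
From mathcomp Require Import ring lra.
Import Order.TTheory GRing.Theory Num.Theory.
Set Implicit Arguments. Unset Strict Implicit. Unset Printing Implicit Defensive.
Local Open Scope ring_scope.

(* With [psi = sqrt (nu / mubar)], the objective is the quadratic form at [psi]
   of the symmetric matrix [diag mubar * (h - L)], [L] the (mubar-reversible)
   generator of the swapped process, and shifting by [g] subtracts [g |psi|^2].
   The infimum over controls in the Bellman equation is explicit
   ([inf_u (u a + r ell (u / r)) = r (1 - e^-a)]), which turns the equation into
   the statement that [phi = e^-W] is a positive null vector of the matrix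
   shifted by [gamma].  The ground-state transform by [phi] writes the shifted
   form as a sum of squares, so [gamma] is the minimum and [mubar phi^2] attains
   it.  Conversely, at a minimiser the shifted form is positive semidefinite and
   vanishes at [psi], so [psi] is a null vector (Bellman equation), positive by
   irreducibility; equality in the sum of squares forces [psi / phi] constant,
   hence [psi = phi]. *)

(** * Quadratic forms of symmetric matrices *)

Lemma lin_quad_ge0_eq0 (R : realFieldType) (L K : R) :
  (forall t, 0 <= t * L + t ^+ 2 * K) -> L = 0.
Proof.
move=> H; set d := `|K| + 1.
have d_gt0 : 0 < d by rewrite ltr_wpDl.
have Kd : K - d < 0 by have := ler_norm K; rewrite /d; lra.
have := H (- L / d).
have -> : - L / d * L + (- L / d) ^+ 2 * K = L ^+ 2 / d ^+ 2 * (K - d).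
  by field; rewrite gt_eqF.
rewrite nmulr_lge0 // ler_pdivrMr ?exprn_gt0 // mul0r => L2.
by apply/eqP; rewrite -sqrf_eq0 eq_le L2 sqr_ge0.
Qed.

Section QuadraticForm.
Variables (R : realFieldType) (T : finType) (M : T -> T -> R).

Definition qform (a b : T -> R) : R := \sum_x \sum_y M x y * a x * b y.

Lemma qformE a b : qform a b = \sum_x a x * \sum_y M x y * b y.
Proof.
by apply: eq_bigr => x _; rewrite mulr_sumr; apply: eq_bigr => y _; ring.
Qed.

Lemma qformZ k a :
  qform (fun x => k * a x) (fun x => k * a x) = k ^+ 2 * qform a a.
Proof.
rewrite /qform mulr_sumr; apply: eq_bigr => x _; rewrite mulr_sumr.
by apply: eq_bigr => y _; ring.
Qed.

Lemma qformDZ a v t :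
  qform (fun x => a x + t * v x) (fun x => a x + t * v x) =
  qform a a + t * (qform a v + qform v a) + t ^+ 2 * qform v v.
Proof.
rewrite /qform -!big_split !mulr_sumr -!big_split /=; apply: eq_bigr => x _.
rewrite -!big_split !mulr_sumr -!big_split /=.
by apply: eq_bigr => y _; ring.
Qed.

Hypothesis M_sym : forall x y, M x y = M y x.
Hypothesis M_offdiag_le0 : forall x y, x != y -> M x y <= 0.

Lemma qformC a b : qform a b = qform b a.
Proof.
rewrite /qform exchange_big /=.
by apply: eq_bigr => x _; apply: eq_bigr => y _; rewrite M_sym; ring.
Qed.

Lemma qform_norm_le a :
  qform (fun x => `|a x|) (fun x => `|a x|) <= qform a a.
Proof.
apply: ler_sum => x _; apply: ler_sum => y _; rewrite -!mulrA -normrM.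
have [<-|xy] := eqVneq x y; first by rewrite ger0_norm // -expr2 sqr_ge0.
by rewrite ler_wnM2l ?M_offdiag_le0 // ?ler_norm.
Qed.

Lemma qform_psd_kernel psi :
  (forall a, 0 <= qform a a) -> qform psi psi = 0 ->
  forall x, \sum_y M x y * psi y = 0.
Proof.
move=> psd psi0; set E := fun x => \sum_y M x y * psi y.
have QE : qform E psi = \sum_x E x ^+ 2.
  by rewrite qformE; apply: eq_bigr => x _; rewrite expr2.
have E2 : \sum_x E x ^+ 2 = 0.
  suff : (\sum_x E x ^+ 2) *+ 2 = 0 by move/eqP; rewrite mulrn_eq0 => /eqP.
  apply: (lin_quad_ge0_eq0 (K := qform E E)) => t.
  by have := psd (fun x => psi x + t * E x); rewrite qformDZ psi0 (qformC psi) QE add0r.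
move=> x; apply/eqP; rewrite -sqrf_eq0; apply/eqP.
by apply: (psumr_eq0P _ E2) => // y _; exact: sqr_ge0.
Qed.

Lemma qform_kernel_zero_spread psi x y :
  (forall z, 0 <= psi z) -> \sum_z M x z * psi z = 0 -> psi x = 0 ->
  M x y < 0 -> psi y = 0.
Proof.
move=> psi_ge0 Mpsi psix Mxy.
have term_le0 z : M x z * psi z <= 0.
  have [<-|xz] := eqVneq x z; first by rewrite psix mulr0.
  by rewrite mulr_le0_ge0 ?M_offdiag_le0.
have : M x y * psi y = 0.
  apply/eqP; rewrite -oppr_eq0; apply/eqP.
  apply: (@psumr_eq0P _ _ predT (fun z => - (M x z * psi z))) => //.
    by move=> z _; rewrite oppr_ge0.
  by rewrite sumrN Mpsi oppr0.
by move/eqP; rewrite mulf_eq0 (lt_eqF Mxy) => /eqP.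
Qed.

Section GroundState.
Variable phi : T -> R.
Hypothesis phi_gt0 : forall x, 0 < phi x.
Hypothesis M_phi : forall x, \sum_y M x y * phi y = 0.

Lemma qform_ground_state a :
  2 * qform a a =
  \sum_x \sum_y - M x y * phi x * phi y * (a x / phi x - a y / phi y) ^+ 2.
Proof.
have phi_neq0 x : phi x != 0 by rewrite gt_eqF.
set t := fun x => a x / phi x.
have a_t x : a x = t x * phi x by rewrite /t divfK.
have diag0 : \sum_x \sum_y M x y * phi x * phi y * t x ^+ 2 = 0.
  apply: big1 => x _; transitivity (t x ^+ 2 * phi x * \sum_y M x y * phi y).
    by rewrite mulr_sumr; apply: eq_bigr => y _; ring.
  by rewrite M_phi mulr0.
have diag0' : \sum_x \sum_y M x y * phi x * phi y * t y ^+ 2 = 0.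
  rewrite exchange_big /= -[RHS]diag0; apply: eq_bigr => x _; apply: eq_bigr => y _.
  by rewrite M_sym; ring.
rewrite [RHS](_ : _ = \sum_x \sum_y (- (M x y * phi x * phi y * t x ^+ 2)
    - (M x y * phi x * phi y * t y ^+ 2) + 2 * (M x y * a x * a y))); last first.
  by apply: eq_bigr => x _; apply: eq_bigr => y _; rewrite (a_t x) (a_t y) !mulfK //; ring.
under eq_bigr => x _ do rewrite !big_split /= !sumrN -mulr_sumr.
by rewrite !big_split /= !sumrN -mulr_sumr diag0 diag0' /qform; ring.
Qed.

Lemma ground_gap_ge0 a x y :
  0 <= - M x y * phi x * phi y * (a x / phi x - a y / phi y) ^+ 2.
Proof.
have [<-|xy] := eqVneq x y; first by rewrite subrr expr0n mulr0.
apply: mulr_ge0; last exact: sqr_ge0.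
by rewrite !mulr_ge0 ?oppr_ge0 ?M_offdiag_le0 // ltW.
Qed.

Lemma qform_ground_ge0 a : 0 <= qform a a.
Proof.
rewrite -(pmulr_rge0 _ (ltr0Sn R 1)) qform_ground_state.
by apply: sumr_ge0 => x _; apply: sumr_ge0 => y _; exact: ground_gap_ge0.
Qed.

Lemma qform_ground_eq0 a x y :
  qform a a = 0 -> M x y < 0 -> a x / phi x = a y / phi y.
Proof.
move=> Qa0 Mxy; have := qform_ground_state a; rewrite Qa0 mulr0 => /esym gap0.
have row_ge0 z : 0 <= \sum_w - M z w * phi z * phi w * (a z / phi z - a w / phi w) ^+ 2.
  by apply: sumr_ge0 => w _; exact: ground_gap_ge0.
have := @psumr_eq0P _ _ predT _ (fun z _ => row_ge0 z) gap0 x isT.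
move=> /(@psumr_eq0P _ _ predT _ (fun y _ => ground_gap_ge0 a x y))/(_ y isT)/eqP.
have gap_gt0 : 0 < - M x y * phi x * phi y by rewrite !mulr_gt0 // oppr_gt0.
by rewrite mulf_eq0 gt_eqF //= sqrf_eq0 subr_eq0 => /eqP.
Qed.

End GroundState.
End QuadraticForm.

(** * The inner minimisation over controls *)

Section ControlCost.
Variable R : realType.

Lemma ell_lower (r u a : R) : 0 < r -> 0 <= u ->
  r * (1 - expR (- a)) <= u * a + r * ell (u / r).
Proof.
move=> r_gt0.
have [v ->] : {v | u = v * r} by exists (u / r); rewrite divfK ?gt_eqF.
rewrite pmulr_lge0 // mulfK ?gt_eqF // /ell => v_ge0.
have [->|v_neq0] := eqVneq v 0; first by have := expR_gt0 (- a); nra.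
have v_gt0 : 0 < v by rewrite lt0r v_neq0.
rewrite [expR (- a)](_ : _ = v * expR (- (a + ln v))); last first.
  rewrite opprD expRD mulrCA -[LHS]mulr1; congr (_ * _).
  by rewrite expRN lnK ?posrE // divff // gt_eqF.
have := expR_ge1Dx (- (a + ln v)); have := mulr_gt0 r_gt0 v_gt0; nra.
Qed.

Lemma ell_attained (r a : R) : 0 < r ->
  r * expR (- a) * a + r * ell (r * expR (- a) / r) = r * (1 - expR (- a)).
Proof.
move=> r_gt0; rewrite [r * _ / r]mulrAC divff ?gt_eqF // mul1r /ell gt_eqF ?expR_gt0 // expRK.
ring.
Qed.

Lemma rell_lower (r u a : R) : 0 <= r -> 0 <= u ->
  ((r * (1 - expR (- a)))%:E <= (u * a)%:E + rell r u)%E.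
Proof.
move=> r_ge0 u_ge0; rewrite /rell; case: ifPn => [r_gt0|r_le0].
  by rewrite -EFinD lee_fin ell_lower.
have -> : r = 0 by apply/eqP; rewrite eq_le r_ge0 andbT leNgt.
by case: eqP => [->|_]; rewrite ?mul0r ?adde0 ?addey ?leey.
Qed.

Lemma rell_attained (r a : R) : 0 <= r ->
  ((r * expR (- a) * a)%:E + rell r (r * expR (- a)) = (r * (1 - expR (- a)))%:E)%E.
Proof.
move=> r_ge0; rewrite /rell; case: ifPn => [r_gt0|r_le0].
  by rewrite -EFinD ell_attained.
have -> : r = 0 by apply/eqP; rewrite eq_le r_ge0 andbT leNgt.
by rewrite !mul0r eqxx adde0.
Qed.

Lemma ereal_inf_control_cost (T : finType) (r a : T -> R) (c : R) :
  (forall y, 0 <= r y) ->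
  ereal_inf [set (\sum_y ((u y * a y)%:E + rell (r y) (u y)) + c%:E)%E
            | u in [set u : T -> R | forall y, 0 <= u y]] =
  (\sum_y r y * (1 - expR (- a y)) + c)%:E.
Proof.
move=> r_ge0; apply/eqP; rewrite eq_le; apply/andP; split.
  apply: ge_ereal_inf; exists ((\sum_y r y * (1 - expR (- a y)) + c)%:E) => //.
  exists (fun y => r y * expR (- a y)); first by move=> y; rewrite mulr_ge0 ?expR_ge0.
  by under eq_bigr => y _ do rewrite rell_attained //; rewrite sumEFin -EFinD.
apply: le_ereal_inf_tmp => _ [u u_ge0 <-].
by rewrite EFinD -sumEFin leeD2r // lee_sum // => y _; exact: rell_lower.
Qed.

End ControlCost.

(** * The infinite swapping process *)

Lemma expR_Nmul2 (R : realType) (w : R) : expR (- 2 * w) = expR (- w) ^+ 2.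
Proof. by rewrite mulNr -mulrN expRM_natl. Qed.

Section InfiniteSwapping.
Variables (R : realType) (S : finType) (G1 G2 : S -> S -> R) (mu1 mu2 : S -> R).
Hypotheses (G1_rate : rate_matrix G1) (G2_rate : rate_matrix G2).
Hypothesis G1_irr : irreducible G1.
Hypotheses (mu1_gt0 : forall x, 0 < mu1 x) (mu2_gt0 : forall x, 0 < mu2 x).
Hypotheses (G1_rev : reversible G1 mu1) (G2_rev : reversible G2 mu2).
Variable h : S * S -> R.

Local Notation mb := (mubar mu1 mu2).
Local Notation rs := (rinf G1 G2 mu1 mu2).
Local Notation qs := (qinf G1 G2 mu1 mu2).
Local Notation obj := (objective G1 G2 mu1 mu2 h).

Lemma mu_gt0 a b : 0 < mu mu1 mu2 a b.
Proof. exact: mulr_gt0. Qed.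

Lemma mubar_gt0 x : 0 < mb x.
Proof. by rewrite divr_gt0 ?addr_gt0 ?mu_gt0. Qed.

Lemma rho_gt0 a b : 0 < rho mu1 mu2 a b.
Proof. by rewrite divr_gt0 ?addr_gt0 ?mu_gt0. Qed.

Lemma rinf_xx x : rs x x = 0.
Proof. by rewrite /rinf !eqxx. Qed.

Lemma rinf_ge0 x y : 0 <= rs x y.
Proof.
have [G1_ge0 _] := G1_rate; have [G2_ge0 _] := G2_rate.
rewrite /rinf; case: ifP => [/andP[_ neq]|_]; last case: ifP => [/andP[_ neq]|_] //.
  by apply: addr_ge0; apply: mulr_ge0; rewrite ?G1_ge0 ?G2_ge0 ?ltW ?rho_gt0.
by apply: addr_ge0; apply: mulr_ge0; rewrite ?G1_ge0 ?G2_ge0 ?ltW ?rho_gt0.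
Qed.

Lemma mubar_rinf_sym x y : mb x * rs x y = mb y * rs y x.
Proof.
have G1E u v : G1 v u = mu1 u * G1 u v / mu1 v.
  by rewrite G1_rev mulrAC divff ?mul1r // gt_eqF.
have G2E u v : G2 v u = mu2 u * G2 u v / mu2 v.
  by rewrite G2_rev mulrAC divff ?mul1r // gt_eqF.
case: x y => [a b] [c d]; rewrite /rinf /= [d == b]eq_sym [c == a]eq_sym.
case: ifP => [/andP[/eqP <- _]|_].
  by rewrite G1E G2E /mubar /rho /mu /=; field; rewrite !gt_eqF // ?addr_gt0 ?mulr_gt0.
case: ifP => [/andP[/eqP <- _]|_]; last by rewrite !mulr0.
by rewrite G1E G2E /mubar /rho /mu /=; field; rewrite !gt_eqF // ?addr_gt0 ?mulr_gt0.
Qed.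

Lemma rinf_gt0_sym x y : 0 < rs x y -> 0 < rs y x.
Proof.
by rewrite -(pmulr_rgt0 _ (mubar_gt0 x)) mubar_rinf_sym pmulr_rgt0 ?mubar_gt0.
Qed.

(* Irreducibility of [G1] alone suffices: both [rho]'s are positive, so every
   [G1]-move of either coordinate is a move of the swapped process. *)
Lemma rinf_connected (P : pred (S * S)) :
  (forall x y, 0 < rs x y -> P x = P y) -> forall x y, P x = P y.
Proof.
move=> P_edge [a b] [c d]; have [G2_ge0 _] := G2_rate.
pose E := [rel u v | (u != v) && (0 < G1 u v)].
have rate_gt0 u v w w' :
    E u v -> 0 < rho mu1 mu2 w w' * G1 u v + rho mu1 mu2 w' w * G2 u v.
  case/andP=> uv G1uv; have := mulr_gt0 (rho_gt0 w w') G1uv.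
  by have := mulr_ge0 (ltW (rho_gt0 w' w)) (G2_ge0 _ _ uv); lra.
transitivity (P (c, b)).
  have E_closed : fingraph.closed E [pred z | P (z, b)].
    move=> u v Euv; apply: P_edge; rewrite /rinf /= eqxx.
    by case/andP: (Euv) => -> _; exact: rate_gt0.
  exact (closed_connect E_closed (G1_irr a c)).
have E_closed : fingraph.closed E [pred z | P (c, z)].
  move=> u v Euv; apply: P_edge; rewrite /rinf /= eqxx.
  by case/andP: (Euv) => uv _; rewrite (negbTE uv) /= addrC; exact: rate_gt0.
exact (closed_connect E_closed (G1_irr b d)).
Qed.

(* [fk_mx g = diag mubar * (h - g - L)] with [L] the generator of the swapped
   process; detailed balance makes it symmetric. *)
Definition fk_mx (g : R) (x y : S * S) : R :=
  (if x == y then (qs x + h x - g) * mb x else 0) - rs x y * mb x.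

Lemma fk_mx_sym g x y : fk_mx g x y = fk_mx g y x.
Proof.
rewrite /fk_mx eq_sym; have [->//|_] := eqVneq y x.
by rewrite ![rs _ _ * _]mulrC mubar_rinf_sym.
Qed.

Lemma fk_mx_offdiag g x y : x != y -> fk_mx g x y = - (rs x y * mb x).
Proof. by move=> /negbTE xy; rewrite /fk_mx xy sub0r. Qed.

Lemma fk_mx_offdiag_le0 g x y : x != y -> fk_mx g x y <= 0.
Proof.
by move=> xy; rewrite fk_mx_offdiag // oppr_le0 mulr_ge0 ?rinf_ge0 // ltW ?mubar_gt0.
Qed.

Lemma fk_mx_lt0 g x y : 0 < rs x y -> fk_mx g x y < 0.
Proof.
have [->|xy] := eqVneq x y; first by rewrite rinf_xx ltxx.
by move=> rxy; rewrite fk_mx_offdiag // oppr_lt0 mulr_gt0 ?mubar_gt0.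
Qed.

Lemma fk_mx_row g b x :
  \sum_y fk_mx g x y * b y = mb x * ((qs x + h x - g) * b x - \sum_y rs x y * b y).
Proof.
under eq_bigr => y _ do rewrite /fk_mx mulrBl.
rewrite sumrB (bigD1 x) //= eqxx big1 ?addr0 => [|y /negbTE]; last first.
  by rewrite eq_sym => ->; rewrite mul0r.
by rewrite mulrBr mulr_sumr; congr (_ - _); [ring | apply: eq_bigr => y _; ring].
Qed.

Lemma qform_fk_mx_shift g a :
  qform (fk_mx g) a a = qform (fk_mx 0) a a - g * \sum_x mb x * a x ^+ 2.
Proof.
by rewrite !qformE mulr_sumr -sumrB; apply: eq_bigr => x _; rewrite !fk_mx_row; ring.
Qed.

Definition sqrt_density (nu : S * S -> R) (x : S * S) : R := Num.sqrt (nu x / mb x).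

Lemma sqrt_density_sqr nu x : 0 <= nu x -> sqrt_density nu x ^+ 2 = nu x / mb x.
Proof. by move=> nu_ge0; rewrite sqr_sqrtr // divr_ge0 // ltW ?mubar_gt0. Qed.

Lemma sum_mubar_sqrt_density nu : (forall x, 0 <= nu x) ->
  \sum_x mb x * sqrt_density nu x ^+ 2 = \sum_x nu x.
Proof.
move=> nu_ge0; apply: eq_bigr => x _.
by rewrite sqrt_density_sqr // mulrC divfK // gt_eqF ?mubar_gt0.
Qed.

Lemma objective_qform nu : (forall x, 0 <= nu x) ->
  obj nu = qform (fk_mx 0) (sqrt_density nu) (sqrt_density nu).
Proof.
move=> nu_ge0; rewrite qformE /objective /Jrate /= addrAC -big_split -sumrB /=.
apply: eq_bigr => x _; rewrite fk_mx_row [\sum_y rs x y * _](bigD1 x) //= rinf_xx mul0r add0r.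
have -> : \sum_(y | y != x) Num.sqrt (nu x / mb x) * Num.sqrt (nu y / mb y) * rs x y * mb x
    = sqrt_density nu x * mb x * \sum_(y | y != x) rs x y * sqrt_density nu y.
  by rewrite mulr_sumr; apply: eq_bigr => y _; rewrite /sqrt_density; ring.
have nuE : nu x = mb x * sqrt_density nu x ^+ 2.
  by rewrite sqrt_density_sqr // mulrC divfK // gt_eqF ?mubar_gt0.
by rewrite nuE; field; rewrite gt_eqF ?mubar_gt0.
Qed.

Lemma objective_shift g nu : prob_vec nu ->
  obj nu = qform (fk_mx g) (sqrt_density nu) (sqrt_density nu) + g.
Proof.
case=> nu_ge0 nu1.
by rewrite qform_fk_mx_shift sum_mubar_sqrt_density // nu1 mulr1 subrK objective_qform.
Qed.

Definition gibbs (W : S * S -> R) (x : S * S) : R := mb x * expR (- 2 * W x).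

Lemma gibbs_prob W : \sum_x gibbs W x = 1 -> prob_vec (gibbs W).
Proof. by split=> // x; rewrite mulr_ge0 ?expR_ge0 // ltW ?mubar_gt0. Qed.

Lemma sqrt_density_gibbs W : sqrt_density (gibbs W) = fun x => expR (- W x).
Proof.
apply: funext => x; rewrite /sqrt_density /gibbs mulrAC divff ?mul1r ?gt_eqF ?mubar_gt0 //.
by rewrite expR_Nmul2 sqrtr_sqr ger0_norm ?expR_ge0.
Qed.

Lemma bellman_iff_explicit g W : bellman G1 G2 mu1 mu2 h g W <->
  forall x, \sum_y rs x y * (1 - expR (- (W y - W x))) + (h x - g) = 0.
Proof.
have infE x := ereal_inf_control_cost (fun y => W y - W x) (h x - g) (rinf_ge0 x).
split=> bell x; last by rewrite infE bell.
by move: (bell x); rewrite infE => /esym/eqP; rewrite eqe => /eqP.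
Qed.

Lemma fk_mx_row_expR g W x :
  \sum_y fk_mx g x y * expR (- W y) =
  mb x * expR (- W x) * (\sum_y rs x y * (1 - expR (- (W y - W x))) + (h x - g)).
Proof.
have expR_diff y : expR (- (W y - W x)) = expR (- W y) / expR (- W x).
  by rewrite -expRN opprK -expRD opprB addrC.
under [in RHS]eq_bigr => y _ do rewrite expR_diff mulrBr mulr1 mulrA.
rewrite fk_mx_row sumrB -mulr_suml [\sum_y rs x y](bigD1 x) //= rinf_xx add0r.
by rewrite /qinf; field; rewrite gt_eqF ?expR_gt0.
Qed.

Lemma bellman_kernel g W : bellman G1 G2 mu1 mu2 h g W <->
  forall x, \sum_y fk_mx g x y * expR (- W y) = 0.
Proof.
rewrite bellman_iff_explicit; split=> bell x; first by rewrite fk_mx_row_expR bell mulr0.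
have mb_expR_neq0 : mb x * expR (- W x) != 0.
  by apply: mulf_neq0; rewrite gt_eqF ?expR_gt0 ?mubar_gt0.
move: (bell x); rewrite fk_mx_row_expR => /eqP.
by rewrite mulf_eq0 (negbTE mb_expR_neq0) => /eqP.
Qed.

Lemma bellman_qform_ge0 g W :
  bellman G1 G2 mu1 mu2 h g W -> forall a, 0 <= qform (fk_mx g) a a.
Proof.
move/bellman_kernel => ker a.
apply: (qform_ground_ge0 (fk_mx_sym g) (fk_mx_offdiag_le0 g) _ ker) => x.
exact: expR_gt0.
Qed.

Lemma bellman_lower_bound g W nu :
  bellman G1 G2 mu1 mu2 h g W -> prob_vec nu -> g <= obj nu.
Proof.
by move=> bell nu_prob; rewrite (objective_shift g nu_prob) lerDr (bellman_qform_ge0 bell).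
Qed.

Lemma bellman_gibbs_value g W :
  bellman G1 G2 mu1 mu2 h g W -> \sum_x gibbs W x = 1 -> obj (gibbs W) = g.
Proof.
move=> bell norm; rewrite (objective_shift g (gibbs_prob norm)) sqrt_density_gibbs.
by rewrite qformE big1 ?add0r // => x _; rewrite (bellman_kernel g W).1 ?mulr0.
Qed.

Lemma bellman_gibbs_minimizer g W :
  bellman G1 G2 mu1 mu2 h g W -> \sum_x gibbs W x = 1 ->
  minimizer G1 G2 mu1 mu2 h (gibbs W).
Proof.
move=> bell norm; split=> [|nu nu_prob]; first exact: gibbs_prob.
by rewrite (bellman_gibbs_value bell norm) (bellman_lower_bound bell nu_prob).
Qed.

(* Testing the minimality of [nu] against the probability vector [mubar * c^2],
   [c] the normalisation of [|a|], shows the form is positive semidefinite. *)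
Lemma minimizer_qform_ge0 nu :
  minimizer G1 G2 mu1 mu2 h nu -> forall a, 0 <= qform (fk_mx (obj nu)) a a.
Proof.
case=> nu_prob nu_min a; set g := obj nu.
apply: le_trans (qform_norm_le (fk_mx_offdiag_le0 g) a).
set b := fun x => `|a x|; set n := \sum_x mb x * b x ^+ 2.
have term_ge0 x : 0 <= mb x * b x ^+ 2 by rewrite mulr_ge0 ?sqr_ge0 // ltW ?mubar_gt0.
have [n0|n_neq0] := eqVneq n 0.
  have b0 x : b x = 0.
    move/eqP: (@psumr_eq0P _ _ predT _ (fun x _ => term_ge0 x) n0 x isT).
    by rewrite mulf_eq0 gt_eqF ?mubar_gt0 //= sqrf_eq0 => /eqP.
  by rewrite qformE big1 // => x _; rewrite b0 mul0r.
have n_gt0 : 0 < n by rewrite lt0r n_neq0 sumr_ge0.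
set c := fun x => (Num.sqrt n)^-1 * b x.
set nu' := fun x => mb x * c x ^+ 2.
have nu'_prob : prob_vec nu'.
  split=> [x|]; first by rewrite mulr_ge0 ?sqr_ge0 // ltW ?mubar_gt0.
  rewrite -[RHS](mulVf n_neq0) mulr_sumr; apply: eq_bigr => x _.
  by rewrite /nu' /c exprMn exprVn sqr_sqrtr ?ltW //; ring.
have c_sqrt : sqrt_density nu' = c.
  apply: funext => x; rewrite /sqrt_density /nu' mulrAC divff ?mul1r ?gt_eqF ?mubar_gt0 //.
  by rewrite sqrtr_sqr ger0_norm // mulr_ge0 ?invr_ge0 ?sqrtr_ge0 ?normr_ge0.
have := nu_min _ nu'_prob; rewrite -/g (objective_shift g nu'_prob) c_sqrt qformZ lerDr.
by rewrite exprVn sqr_sqrtr ?(ltW n_gt0) // pmulr_rge0 // invr_gt0.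
Qed.

Lemma minimizer_kernel nu : minimizer G1 G2 mu1 mu2 h nu ->
  forall x, \sum_y fk_mx (obj nu) x y * sqrt_density nu y = 0.
Proof.
move=> nu_min; apply: (qform_psd_kernel (fk_mx_sym _) (minimizer_qform_ge0 nu_min)).
by have := objective_shift (obj nu) nu_min.1; lra.
Qed.

Lemma minimizer_sqrt_density_gt0 nu :
  minimizer G1 G2 mu1 mu2 h nu -> forall x, 0 < sqrt_density nu x.
Proof.
move=> nu_min; have [[nu_ge0 nu1] _] := nu_min.
have psi_ge0 x : 0 <= sqrt_density nu x by exact: sqrtr_ge0.
have zero_edge x y : 0 < rs x y -> sqrt_density nu x = 0 -> sqrt_density nu y = 0.
  move=> rxy psi0; apply: (qform_kernel_zero_spread (fk_mx_offdiag_le0 (obj nu)) psi_ge0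
    (minimizer_kernel nu_min x) psi0 (fk_mx_lt0 _ rxy)).
have zero_const : forall x y, (sqrt_density nu x == 0) = (sqrt_density nu y == 0).
  apply: rinf_connected => x y rxy.
  by apply/eqP/eqP; [exact: zero_edge | exact: zero_edge (rinf_gt0_sym rxy)].
move=> x; rewrite lt0r psi_ge0 andbT; apply/negP => /eqP psi0.
have : \sum_z nu z = 0.
  rewrite -sum_mubar_sqrt_density // big1 // => z _.
  by move: (zero_const z x); rewrite psi0 eqxx => /eqP ->; rewrite expr0n mulr0.
by rewrite nu1 => /eqP; rewrite oner_eq0.
Qed.

(* By the ground-state identity for [expR (- W)], equality in the lower bound
   forces [sqrt_density nu / expR (- W)] to be constant on the connected graph. *)
Lemma bellman_minimizer_unique g W nu :
  bellman G1 G2 mu1 mu2 h g W -> \sum_x gibbs W x = 1 ->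
  minimizer G1 G2 mu1 mu2 h nu ->
  g = obj nu /\ W = (fun x => - ln (sqrt_density nu x)).
Proof.
move=> bell norm [nu_prob nu_min].
have g_eq : g = obj nu.
  apply/eqP; rewrite eq_le (bellman_lower_bound bell nu_prob) /=.
  by rewrite -[X in _ <= X](bellman_gibbs_value bell norm) (nu_min _ (gibbs_prob norm)).
split=> //; set phi := fun x => expR (- W x); set psi := sqrt_density nu.
have Q0 : qform (fk_mx g) psi psi = 0.
  by have := objective_shift g nu_prob; rewrite -g_eq; lra.
have ratio_edge x y : 0 < rs x y -> psi x / phi x = psi y / phi y.
  move=> rxy; apply: (qform_ground_eq0 (fk_mx_sym g) (fk_mx_offdiag_le0 g) _
    ((bellman_kernel g W).1 bell) Q0 (fk_mx_lt0 g rxy)) => z; exact: expR_gt0.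
have ratio_const x y : psi x / phi x = psi y / phi y.
  apply/eqP; have := rinf_connected (P := fun z => psi z / phi z == psi y / phi y).
  by move=> /(_ _ x y) /= ->; rewrite ?eqxx // => u v /ratio_edge ->.
have psi_phi x : psi x = phi x.
  set c := psi x / phi x.
  have psiE z : psi z = c * phi z by rewrite /c (ratio_const x z) divfK ?gt_eqF ?expR_gt0.
  have c2 : c ^+ 2 = 1.
    rewrite -[RHS]nu_prob.2 -(sum_mubar_sqrt_density nu_prob.1) -[c ^+ 2]mulr1 -norm.
    rewrite mulr_sumr; apply: eq_bigr => z _.
    by rewrite -/psi psiE /gibbs expR_Nmul2 /phi; ring.
  have c_ge0 : 0 <= c by rewrite divr_ge0 ?sqrtr_ge0 ?expR_ge0.
  by rewrite psiE (_ : c = 1) ?mul1r //; nra.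
by apply: funext => x; rewrite psi_phi expRK opprK.
Qed.

End InfiniteSwapping.

Theorem lemma5p4 (R : realType) (S : finType)
  (G1 G2 : S -> S -> R) (mu1 mu2 : S -> R) (h : S * S -> R) :
  rate_matrix G1 -> rate_matrix G2 ->
  irreducible G1 -> irreducible G2 ->
  prob_vec mu1 -> prob_vec mu2 ->
  (forall x, 0 < mu1 x) -> (forall x, 0 < mu2 x) ->
  reversible G1 mu1 -> reversible G2 mu2 ->
  (forall (gamma : R) (W : S * S -> R),
      bellman G1 G2 mu1 mu2 h gamma W ->
      \sum_x mubar mu1 mu2 x * expR (- 2 * W x) = 1 ->
      minimizer G1 G2 mu1 mu2 h (fun x => mubar mu1 mu2 x * expR (- 2 * W x)))
  /\
  (forall nustar : S * S -> R,
      minimizer G1 G2 mu1 mu2 h nustar ->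
      let Wstar := fun x => - ln (Num.sqrt (nustar x / mubar mu1 mu2 x)) in
      let gstar := objective G1 G2 mu1 mu2 h nustar in
      bellman G1 G2 mu1 mu2 h gstar Wstar /\
      (forall (gamma : R) (W : S * S -> R),
          bellman G1 G2 mu1 mu2 h gamma W ->
          \sum_x mubar mu1 mu2 x * expR (- 2 * W x) = 1 ->
          gamma = gstar /\ W = Wstar)).
Proof.
move=> G1_rate G2_rate G1_irr _ _ _ mu1_gt0 mu2_gt0 G1_rev G2_rev.
split=> [gamma W|nu nu_min Wstar gstar]; first exact: bellman_gibbs_minimizer.
split=> [|gamma W bell norm]; last exact: bellman_minimizer_unique.
have ker := minimizer_kernel G1_rate G2_rate mu1_gt0 mu2_gt0 G1_rev G2_rev nu_min.
have psi_gt0 :=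
  minimizer_sqrt_density_gt0 G1_rate G2_rate G1_irr mu1_gt0 mu2_gt0 G1_rev G2_rev nu_min.
apply/bellman_kernel => // x; rewrite -[RHS](ker x).
by apply: eq_bigr => y _; rewrite /Wstar opprK lnK // posrE psi_gt0.
Qed.
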